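(* Let $R$ be a blind bisimulation on the nodes of a $\lambda$-graph $G$. Let $n,m,m'$ be nodes and $\tau$ a non-empty trace with $n\,R\,m$ and $m\xrightarrow{\tau}m'$. Then $n\,R\,m'$ does not hold.
   Context: A pre-$\lambda$-graph is a directed graph whose nodes are of four kinds: an application node $@(n_1,n_2)$ has exactly two children, its left child $n_1$ and its right child $n_2$; an abstraction node $\lambda(n)$ has exactly one child, its body $n$; a free variable node has no children and carries an atom $\mathrm{id}(n)$ from a fixed set of atoms, distinct free variable nodes carrying distinct atoms; a bound variable node $\mathrm{var}(l)$ has exactly one outgoing binding edge, to an abstraction node $l$ (its binder). A trace is a finite sequence of directions from $\{\swarrow,\downarrow,\searrow\}$; $\epsilon$ is the empty trace and $d\cdot\tau$ is the trace $\tau$ extended by one final step $d$. Paths $n\xrightarrow{\tau}m$ are defined inductively: $n\xrightarrow{\epsilon}n$; if $n\xrightarrow{\tau}\lambda(m)$ then $n\xrightarrow{\downarrow\cdot\tau}m$; if $n\xrightarrow{\tau}@(m_1,m_2)$ then $n\xrightarrow{\swarrow\cdot\tau}m_1$ and $n\xrightarrow{\searrow\cdot\tau}m_2$ (binding edges are never followed). The path $n\xrightarrow{\tau}$ crosses a node $m$ if either $n\xrightarrow{\tau}m$, or $\tau=d\cdot\tau'$ and $n\xrightarrow{\tau'}$ crosses $m$. A root is a node $r$ such that the only path ending in $r$ has the empty trace. A node $m$ dominates $n$ if every path from a root to $n$ crosses $m$. A $\lambda$-graph is a pre-$\lambda$-graph that has finitely many nodes, is acyclic ($n\xrightarrow{\tau}n$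 holds only for $\tau=\epsilon$), and is dominated (every bound variable node $\mathrm{var}(l)$ is dominated by its binder $l$). Two nodes are homogeneous if both are application nodes, or both abstraction nodes, or both free variable nodes, or both bound variable nodes; a binary relation $R$ on nodes is homogeneous if it only relates homogeneous nodes. Rules: $(\swarrow)$: $@(n_1,n_2)\,R\,@(m_1,m_2)$ implies $n_1\,R\,m_1$; $(\searrow)$: $@(n_1,n_2)\,R\,@(m_1,m_2)$ implies $n_2\,R\,m_2$; $(\downarrow)$: $\lambda(n)\,R\,\lambda(m)$ implies $n\,R\,m$. $R$ is propagated if closed under $(\swarrow),(\downarrow),(\searrow)$. A blind bisimulation is a homogeneous propagated relation. *)

From Stdlib Require Import List.
Import ListNotations.

(* Directions of a trace: swarrow (left child), down (abstraction body),
   searrow (right child). *)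
Inductive dir : Type := SW | DN | SE.

(* A trace is a list of directions; the list is stored in reverse order:
   [d :: tau] is the trace  d . tau  = tau extended by one FINAL step d. *)
Definition trace := list dir.

Inductive node_kind (V A : Type) : Type :=
| App  : V -> V -> node_kind V A
| Abs  : V -> node_kind V A
| Free : A -> node_kind V A
| BVar : V -> node_kind V A.        (* var(l), binding edge to l *)
Arguments App {V A}. Arguments Abs {V A}. Arguments Free {V A}. Arguments BVar {V A}.

Record pre_lambda_graph (A : Type) : Type := {
  node : Type;
  lab : node -> node_kind node A;
  free_inj : forall n m a, lab n = Free a -> lab m = Free a -> n = m;
  binder_abs : forall n l, lab n = BVar l -> exists b, lab l = Abs b
}.
Arguments node {A}. Arguments lab {A}.

Section Graph.
Context {A : Type} (G : pre_lambda_graph A).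

(* path n tau m  :  n --tau--> m  (binding edges never followed) *)
Inductive path : node G -> trace -> node G -> Prop :=
| path_nil  : forall n, path n [] n
| path_dn   : forall n tau m b, path n tau m -> lab G m = Abs b -> path n (DN :: tau) b
| path_sw   : forall n tau m m1 m2, path n tau m -> lab G m = App m1 m2 -> path n (SW :: tau) m1
| path_se   : forall n tau m m1 m2, path n tau m -> lab G m = App m1 m2 -> path n (SE :: tau) m2.

Fixpoint crosses (n : node G) (tau : trace) (m : node G) : Prop :=
  path n tau m \/ match tau with [] => False | _ :: tau' => crosses n tau' m end.

Definition is_root (r : node G) : Prop :=
  forall n tau, path n tau r -> tau = [].

Definition dominates (m n : node G) : Prop :=
  forall r tau, is_root r -> path r tau n -> crosses r tau m.

Definition finite_nodes : Prop := exists l : list (node G), forall v, In v l.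

Definition acyclic : Prop := forall n tau, path n tau n -> tau = [].

Definition dominated : Prop := forall v l, lab G v = BVar l -> dominates l v.

Definition is_lambda_graph : Prop := finite_nodes /\ acyclic /\ dominated.

Definition homogeneous_nodes (n m : node G) : Prop :=
  match lab G n, lab G m with
  | App _ _, App _ _ | Abs _, Abs _ | Free _, Free _ | BVar _, BVar _ => True
  | _, _ => False
  end.

Definition homogeneous (R : node G -> node G -> Prop) : Prop :=
  forall n m, R n m -> homogeneous_nodes n m.

Definition propagated (R : node G -> node G -> Prop) : Prop :=
  (forall n m n1 n2 m1 m2, lab G n = App n1 n2 -> lab G m = App m1 m2 -> R n m -> R n1 m1) /\
  (forall n m n1 n2 m1 m2, lab G n = App n1 n2 -> lab G m = App m1 m2 -> R n m -> R n2 m2) /\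
  (forall n m n' m', lab G n = Abs n' -> lab G m = Abs m' -> R n m -> R n' m').

Definition blind_bisimulation (R : node G -> node G -> Prop) : Prop :=
  homogeneous R /\ propagated R.

End Graph.

(* Suppose n R m, n R m' and m --tau--> m' with tau non-empty.
   Blind bisimulations transfer paths along related pairs (in both
   directions), so every path m --s--> z yields paths n --s--> x and then
   m' --s--> y; prefixing with m --tau--> m' gives a path m --tau.s--> y.
   Iterating, m has a path along tau^k for every k.  Paths are deterministic,
   so by acyclicity the endpoints of these paths are pairwise distinct: this
   is an injection of nat into the nodes, contradicting finiteness. *)
From Stdlib Require Import List.
Import ListNotations.
From Stdlib Require Import ClassicalEpsilon PeanoNat Lia.

Fixpoint trace_pow (tau : trace) (k : nat) : trace :=
  match k with 0 => [] | S k => tau ++ trace_pow tau k end.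

Lemma trace_pow_add (tau : trace) (d i : nat) :
  trace_pow tau (d + i) = trace_pow tau d ++ trace_pow tau i.
Proof. induction d as [|d IH]; simpl; [reflexivity|]. now rewrite IH, app_assoc. Qed.

Lemma trace_pow_succ_r (tau : trace) (k : nat) :
  trace_pow tau k ++ tau = trace_pow tau (S k).
Proof.
  induction k as [|k IH]; simpl; [now rewrite app_nil_r |].
  now rewrite <- app_assoc, IH.
Qed.

Lemma no_injection_into_finite {T : Type} (l : list T) (f : nat -> T) :
  (forall x, In x l) -> ~ (forall i j, f i = f j -> i = j).
Proof.
  intros Hl Hinj.
  assert (Hnd : NoDup (map f (seq 0 (S (length l))))).
  { apply NoDup_map_NoDup_ForallPairs; [intros i j _ _; apply Hinj | apply seq_NoDup]. }
  pose proof (NoDup_incl_length Hnd (fun x _ => Hl x)) as Hlen.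
  rewrite length_map, length_seq in Hlen.
  exact (Nat.nle_succ_diag_l _ Hlen).
Qed.

Section Paths.
Context {A : Type} (G : pre_lambda_graph A).

Local Ltac path_step :=
  solve [eapply path_dn; eauto | eapply path_sw; eauto | eapply path_se; eauto].

(* Traces are stored last-step-first, so a path along t1 followed by a path
   along t2 is a path along t2 ++ t1. *)
Lemma path_app (a b c : node G) (t1 t2 : trace) :
  path G a t1 b -> path G b t2 c -> path G a (t2 ++ t1) c.
Proof.
  intros H1 H2; induction H2; simpl; [exact H1 | ..]; path_step.
Qed.

Lemma path_split (a c : node G) (t1 t2 : trace) :
  path G a (t2 ++ t1) c -> exists b, path G a t1 b /\ path G b t2 c.
Proof.
  revert c; induction t2 as [|d t2 IH]; intros c H; simpl in *.
  - exists c; split; [exact H | constructor].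
  - inversion H; subst;
      match goal with Hq : path G a (t2 ++ t1) _ |- _ =>
        destruct (IH _ Hq) as [b [Hab Hb]] end;
      exists b; split; first [assumption | path_step].
Qed.

Lemma path_det (a b b' : node G) (t : trace) :
  path G a t b -> path G a t b' -> b = b'.
Proof.
  intros H; revert b'; induction H; intros b' H'; inversion H'; subst; auto;
    match goal with
    | IH : forall _, path G ?x ?t _ -> _, Hq : path G ?x ?t _ |- _ =>
        specialize (IH _ Hq) end;
    subst; congruence.
Qed.

Lemma trace_pow_endpoints_distinct (tau : trace) (a z : node G) (i j : nat) :
  acyclic G -> tau <> [] ->
  path G a (trace_pow tau i) z -> path G a (trace_pow tau j) z -> i = j.
Proof.
  intros Hac Htau.
  assert (Hlt : forall i j, i < j ->
            path G a (trace_pow tau i) z -> ~ path G a (trace_pow tau j) z).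
  { intros i' j' Hij Hi Hj.
    replace j' with (S (j' - S i') + i') in Hj by lia.
    rewrite trace_pow_add in Hj.
    destruct (path_split _ _ _ _ Hj) as [b [Hab Hbz]].
    rewrite (path_det _ _ _ _ Hab Hi) in Hbz.
    apply Hac in Hbz. simpl in Hbz.
    destruct tau; [contradiction | discriminate]. }
  intros Hi Hj.
  destruct (Nat.lt_trichotomy i j) as [H | [H | H]];
    [exfalso; exact (Hlt _ _ H Hi Hj) | exact H | exfalso; exact (Hlt _ _ H Hj Hi)].
Qed.

Lemma homogeneous_nodes_sym (x y : node G) :
  homogeneous_nodes G x y -> homogeneous_nodes G y x.
Proof.
  unfold homogeneous_nodes; destruct (lab G x), (lab G y); tauto.
Qed.

Lemma blind_bisimulation_converse (R : node G -> node G -> Prop) :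
  blind_bisimulation G R -> blind_bisimulation G (fun x y => R y x).
Proof.
  intros [Hh [Psw [Pse Pdn]]]; repeat split.
  - intros x y Hxy; exact (homogeneous_nodes_sym _ _ (Hh _ _ Hxy)).
  - intros; eauto.
  - intros; eauto.
  - intros; eauto.
Qed.

Lemma blind_bisimulation_transfer (R : node G -> node G -> Prop)
  (x y y' : node G) (s : trace) :
  blind_bisimulation G R -> R x y -> path G y s y' ->
  exists x', path G x s x' /\ R x' y'.
Proof.
  intros [Hh [Psw [Pse Pdn]]] Hxy H; induction H as [|? ? m ? Hp IH Hm | ? ? m ? ? Hp IH Hm | ? ? m ? ? Hp IH Hm];
    [exists x; split; [constructor | exact Hxy] | ..].
  all: destruct (IH Hxy) as [x' [Hx' Rx'm]].
  all: pose proof (Hh _ _ Rx'm) as Hk; unfold homogeneous_nodes in Hk; rewrite Hm in Hk.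
  all: destruct (lab G x') eqn:E; try contradiction.
  all: eexists; split; [path_step | eauto].
Qed.

Lemma blind_bisimulation_transfer_converse (R : node G -> node G -> Prop)
  (x y x' : node G) (s : trace) :
  blind_bisimulation G R -> R x y -> path G x s x' ->
  exists y', path G y s y' /\ R x' y'.
Proof.
  intros HR Hxy Hx.
  destruct (blind_bisimulation_transfer _ y x x' s
              (blind_bisimulation_converse R HR) Hxy Hx) as [y' [Hy' Rxy']].
  exists y'; split; assumption.
Qed.

Lemma extend_by_descent (R : node G -> node G -> Prop) (n m m' : node G)
  (tau : trace) :
  blind_bisimulation G R -> R n m -> R n m' -> path G m tau m' ->
  forall s z, path G m s z -> exists z', path G m (s ++ tau) z'.
Proof.
  intros HR Hnm Hnm' Htau s z Hs.
  destruct (blind_bisimulation_transfer R _ _ _ _ HR Hnm Hs) as [x [Hx _]].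
  destruct (blind_bisimulation_transfer_converse R _ _ _ _ HR Hnm' Hx) as [y [Hy _]].
  exists y; exact (path_app _ _ _ _ _ Htau Hy).
Qed.

Lemma iterated_descent (R : node G -> node G -> Prop) (n m m' : node G)
  (tau : trace) :
  blind_bisimulation G R -> R n m -> R n m' -> path G m tau m' ->
  forall k, exists z, path G m (trace_pow tau k) z.
Proof.
  intros HR Hnm Hnm' Htau k; induction k as [|k [z Hz]].
  - exists m; constructor.
  - destruct (extend_by_descent R n m m' tau HR Hnm Hnm' Htau _ _ Hz) as [z' Hz'].
    exists z'; rewrite <- trace_pow_succ_r; exact Hz'.
Qed.

End Paths.

Theorem mainTheorem7 (A : Type) (G : pre_lambda_graph A) (HG : is_lambda_graph G)
  (R : node G -> node G -> Prop) (HR : blind_bisimulation G R)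
  (n m m' : node G) (tau : trace) (Htau : tau <> []) :
  R n m -> path G m tau m' -> ~ R n m'.
Proof.
  intros Hnm Hp Hnm'.
  destruct HG as [[l Hl] [Hac _]].
  pose proof (iterated_descent G R n m m' tau HR Hnm Hnm' Hp) as Hk.
  set (f := fun k => proj1_sig (constructive_indefinite_description _ (Hk k))).
  assert (Hf : forall k, path G m (trace_pow tau k) (f k)).
  { intro k; exact (proj2_sig (constructive_indefinite_description _ (Hk k))). }
  apply (no_injection_into_finite l f Hl).
  intros i j Hij.
  apply (trace_pow_endpoints_distinct G tau m (f j) i j Hac Htau); [rewrite <- Hij |]; apply Hf.
Qed.
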